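(* Let $n\ge 1$ and $j$ be integers with $0\le j\le n-1$. Then \[ \sum_{k=j}^{n}(-1)^{k-j}{n\brace k}{k\brack j}H_k=\left(\binom{n}{j}-1\right)\frac{B_{n-j}}{n-j}. \]
   Context: $B_m$ denotes the $m$th Bernoulli number, defined by $\frac{t}{e^t-1}=\sum_{m\ge0}B_m\frac{t^m}{m!}$ (so $B_0=1$, $B_1=-1/2$). ${k\brack j}$ denotes the (unsigned) Stirling number of the first kind, defined by $x(x+1)\cdots(x+k-1)=\sum_{j=0}^k{k\brack j}x^j$, and ${n\brace k}$ the Stirling number of the second kind, defined by $x^n=\sum_{k=0}^n(-1)^{n-k}{n\brace k}x(x+1)\cdots(x+k-1)$. $H_k=1+\frac12+\cdots+\frac1k$ is the $k$th harmonic number, $H_0=0$. *)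

From mathcomp Require Import all_boot all_order all_algebra.
Set Implicit Arguments. Unset Strict Implicit. Unset Printing Implicit Defensive.
Import Order.TTheory GRing.Theory Num.Theory.
Local Open Scope ring_scope.

(* Unsigned Stirling numbers of the first kind [k brack j]:
   x(x+1)...(x+k-1) = sum_j [k brack j] x^j, equivalently
   [k+1 brack j+1] = k [k brack j+1] + [k brack j], [0 brack 0] = 1. *)
Fixpoint stirling1 (k j : nat) : nat :=
  match k, j with
  | 0, 0 => 1
  | 0, _.+1 => 0
  | k'.+1, 0 => 0
  | k'.+1, j'.+1 => k' * stirling1 k' j'.+1 + stirling1 k' j'
  end%N.

Fixpoint stirling2 (n k : nat) : nat :=
  match n, k with
  | 0, 0 => 1
  | 0, _.+1 => 0
  | n'.+1, 0 => 0
  | n'.+1, k'.+1 => k'.+1 * stirling2 n' k'.+1 + stirling2 n' k'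
  end%N.

(* Bernoulli numbers with B_1 = -1/2, via
   sum_{k=0}^{m} C(m+1,k) B_k = [m = 0]. *)
Fixpoint bernoulli_seq (m : nat) : seq rat :=
  match m with
  | 0 => [:: 1]
  | m'.+1 =>
      let s := bernoulli_seq m' in
      rcons s (- (\sum_(k < m'.+1) ('C(m'.+2, k))%:R * nth 0 s k) / (m'.+2)%:R)
  end.

Definition bernoulli (m : nat) : rat := nth 0 (bernoulli_seq m) m.

Definition harmonic (k : nat) : rat := \sum_(1 <= i < k.+1) (i%:R)^-1.

From mathcomp Require Import all_boot all_order all_algebra ring zify.
Set Implicit Arguments. Unset Strict Implicit. Unset Printing Implicit Defensive.
Import Order.TTheory GRing.Theory Num.Theory.
Local Open Scope ring_scope.

(* Let P_n(x) = sum_k {n brace k} H_k x(x-1)...(x-k+1).  Expanding the falling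
   factorials with Stirling numbers of the first kind, the left-hand side is the
   coefficient of x^j in P_n.  The recurrence for {n brace k} and
   H_(k+1) - H_k = 1/(k+1) give P_(n+1) = x P_n + S_n with
   S_n = sum_k {n brace k} x(x-1)...(x-k)/(k+1).  As
   x^n = sum_k {n brace k} x(x-1)...(x-k+1), S_n is the polynomial with
   S_n(x+1) - S_n(x) = x^n and S_n(0) = 0, that is Faulhaber's (B_(n+1)(x) - B_(n+1))/(n+1).  Comparing coefficients in
   P_(n+1) = x P_n + S_n proves the formula by induction on n. *)

Lemma stirling1_eq0 k j : (k < j)%N -> stirling1 k j = 0%N.
Proof. by elim: k j => [|k IH] [|j] //= ltkj; rewrite !IH //; lia. Qed.

Lemma stirling2_eq0 n k : (n < k)%N -> stirling2 n k = 0%N.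
Proof. by elim: n k => [|n IH] [|k] //= ltnk; rewrite !IH //; lia. Qed.

Section FallingFactorial.

Variable R : comNzRingType.

Definition falling k : {poly R} := \prod_(i < k) ('X - i%:R%:P).

Lemma fallingS k : falling k.+1 = falling k * ('X - k%:R%:P).
Proof. by rewrite /falling big_ord_recr. Qed.

Lemma coef_falling k j : (falling k)`_j = (-1) ^+ (k - j) * (stirling1 k j)%:R.
Proof.
elim: k j => [|k IH] j.
  by rewrite /falling big_ord0 coef1; case: j => [|j]; rewrite /= ?mul1r ?mulr0.
rewrite fallingS mulrBr coefB coefMX coefMC IH.
case: j => [|j] /=.
  rewrite IH -mulrA -natrM.
  have -> : (stirling1 k 0 * k = 0)%N by case: k {IH}.
  by rewrite !mulr0 subr0.
rewrite IH subSS; have [ltjk|lekj] := ltnP j k.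
  have -> : (k - j = (k - j.+1).+1)%N by lia.
  by rewrite natrD natrM exprS; ring.
by rewrite [stirling1 k j.+1]stirling1_eq0 // muln0 add0n mulr0 mul0r subr0.
Qed.

Lemma mulX_falling k : 'X * falling k = falling k.+1 + k%:R *: falling k.
Proof. by rewrite fallingS mulrBr -mul_polyC mulrC [_%:P * _]mulrC addrNK. Qed.

Lemma horner_falling k x : (falling k).[x] = \prod_(i < k) (x - i%:R).
Proof. by rewrite horner_prod; apply: eq_bigr => i _; rewrite hornerXsubC. Qed.

Lemma falling_forward_diff k x :
  (falling k.+1).[x + 1] - (falling k.+1).[x] = k.+1%:R * (falling k).[x].
Proof.
rewrite !horner_falling big_ord_recl big_ord_recr /= subr0.
have -> : \prod_(i < k) (x + 1 - (bump 0 i)%:R) = \prod_(i < k) (x - i%:R).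
  by apply: eq_bigr => i _; rewrite /bump /= natrD; ring.
ring.
Qed.

Definition stirling_comb (w : nat -> R) n : {poly R} :=
  \sum_(k < n.+1) ((stirling2 n k)%:R * w k) *: falling k.

Lemma stirling_combS w n : stirling_comb w n.+1 = 'X * stirling_comb w n +
  \sum_(k < n.+1) ((stirling2 n k)%:R * (w k.+1 - w k)) *: falling k.+1.
Proof.
rewrite /stirling_comb big_ord_recl /= mul0r scale0r add0r mulr_sumr.
have -> : \sum_(k < n.+1) 'X * (((stirling2 n k)%:R * w k) *: falling k) =
   \sum_(k < n.+1) ((stirling2 n k)%:R * w k) *: falling k.+1 +
   \sum_(k < n.+1) ((stirling2 n k)%:R * w k * k%:R) *: falling k.
  rewrite -big_split; apply: eq_bigr => k _.
  by rewrite -scalerAr mulX_falling scalerDr scalerA.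
have -> : \sum_(k < n.+1) ((stirling2 n k)%:R * w k * k%:R) *: falling k =
   \sum_(k < n.+1) ((stirling2 n k.+1)%:R * w k.+1 * k.+1%:R) *: falling k.+1.
  rewrite big_ord_recl big_ord_recr /= mulr0 scale0r add0r.
  by rewrite stirling2_eq0 // !mul0r scale0r addr0.
rewrite addrAC -!big_split; apply: eq_bigr => k _ /=.
by rewrite -!scalerDl natrD natrM; congr (_ *: _); ring.
Qed.

Lemma expX_stirling_comb n : 'X^n = stirling_comb (fun=> 1) n.
Proof.
elim: n => [|n IH].
  by rewrite /stirling_comb big_ord1 mulr1 scale1r /falling big_ord0 expr0.
rewrite stirling_combS exprS IH big1 ?addr0 // => k _.
by rewrite subrr mulr0 scale0r.
Qed.

Lemma coef_stirling_comb w n j : (j <= n)%N ->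
  (stirling_comb w n)`_j =
  \sum_(j <= k < n.+1) (-1) ^+ (k - j) * (stirling2 n k)%:R * (stirling1 k j)%:R * w k.
Proof.
move=> lejn; rewrite coef_sum.
rewrite -(big_mkord xpredT (fun k => (((stirling2 n k)%:R * w k) *: falling k)`_j)).
rewrite (big_cat_nat _ (n := j)) //=; last by rewrite ltnW.
rewrite big_nat_cond big1 ?add0r => [|k /andP [/andP [_ ltkj] _]].
  by apply: eq_bigr => k _; rewrite coefZ coef_falling; ring.
by rewrite coefZ coef_falling stirling1_eq0 // mulr0n !mulr0.
Qed.

End FallingFactorial.

Lemma poly_eq_forward_diff (R : numDomainType) (p q : {poly R}) :
  p.[0] = q.[0] -> (forall x, p.[x + 1] - p.[x] = q.[x + 1] - q.[x]) -> p = q.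
Proof.
move=> eq0 eq_diff; apply/eqP; rewrite -subr_eq0; apply/eqP.
set d := p - q.
have d_step x : d.[x + 1] = d.[x].
  apply/eqP; rewrite -subr_eq0 !(hornerD, hornerN); apply/eqP.
  transitivity ((p.[x + 1] - p.[x]) - (q.[x + 1] - q.[x])); first ring.
  by rewrite eq_diff subrr.
have d_nat m : d.[m%:R] = 0.
  elim: m => [|m IH]; first by rewrite hornerD hornerN eq0 subrr.
  by rewrite -natr1 d_step.
apply/eqP; apply: contraT => d_neq0.
have := max_poly_roots d_neq0 (_ : all (root d) [seq m%:R | m <- iota 0 (size d)]).
rewrite size_map size_iota ltnn; apply.
  by apply/allP => _ /mapP [m _ ->]; rewrite /root d_nat.
by rewrite map_inj_uniq ?iota_uniq // => a b /eqP; rewrite eqr_nat => /eqP.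
Qed.

Lemma size_bernoulli_seq m : size (bernoulli_seq m) = m.+1.
Proof. by elim: m => //= m IH; rewrite size_rcons IH. Qed.

Lemma nth_bernoulli_seq m i : (i <= m)%N -> nth 0 (bernoulli_seq m) i = bernoulli i.
Proof.
elim: m => [|m IH]; first by rewrite leqn0 => /eqP ->.
rewrite leq_eqVlt => /orP [/eqP -> //|ltim].
by rewrite /= nth_rcons size_bernoulli_seq ltim IH.
Qed.

Lemma sum_bin_bernoulli m :
  \sum_(0 <= i < m.+1) 'C(m.+1, i)%:R * bernoulli i = (m == 0%N)%:R.
Proof.
case: m => [|m]; first by rewrite big_nat1 /bernoulli /= mul1r.
rewrite big_nat_recr //= binSn.
have -> : bernoulli m.+1 = - (\sum_(k < m.+1) 'C(m.+2, k)%:R *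
      nth 0 (bernoulli_seq m) k) / m.+2%:R.
  by rewrite /bernoulli /= nth_rcons size_bernoulli_seq ltnn eqxx.
rewrite big_mkord mulrC divfK ?pnatr_eq0 //; apply/eqP; rewrite subr_eq0; apply/eqP.
by apply: eq_bigr => k _; rewrite nth_bernoulli_seq // -ltnS.
Qed.

Lemma bin_mul_bin_sub n i a : (i + a <= n)%N ->
  ('C(n, i) * 'C(n - i, a) = 'C(n, a) * 'C(n - a, i))%N.
Proof.
move=> le_ian.
have fact_split b c : (b + c <= n)%N ->
    ('C(n, b) * 'C(n - b, c) * (b`! * c`! * (n - b - c)`!) = n`!)%N.
  move=> le_bcn.
  rewrite -(bin_fact (_ : b <= n)%N) -?(bin_fact (_ : c <= n - b)%N); [ring | lia..].
have fact_gt0 : (0 < i`! * a`! * (n - i - a)`!)%N by rewrite !muln_gt0 !fact_gt0.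
apply/eqP; rewrite -(eqn_pmul2r fact_gt0) (fact_split i a) //.
have -> : (n - i - a = n - a - i)%N by lia.
by rewrite [(i`! * _)%N]mulnC (fact_split a i) // addnC.
Qed.

Lemma sum_triangle (V : nmodType) N (F : nat -> nat -> V) :
  \sum_(0 <= i < N) \sum_(0 <= a < N - i) F i a =
  \sum_(0 <= a < N) \sum_(0 <= i < N - a) F i a.
Proof.
have widen b (G : nat -> V) : \sum_(0 <= c < N - b) G c =
    \sum_(0 <= c < N) (if (c < N - b)%N then G c else 0).
  by rewrite (big_nat_widen _ _ _ _ _ (leq_subr b N)) big_mkcond.
under eq_bigr => i _ do rewrite widen.
rewrite exchange_big_nat; apply: eq_big_nat => a /andP [_ ltaN].
rewrite widen; apply: eq_big_nat => i /andP [_ ltiN].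
by have -> : (a < N - i)%N = (i < N - a)%N by apply/idP/idP; lia.
Qed.

Lemma forward_diff_expr (R : pzRingType) (x : R) p :
  (x + 1) ^+ p - x ^+ p = \sum_(0 <= a < p) x ^+ a *+ 'C(p, a).
Proof. by rewrite exprD1n big_ord_recr /= binn mulr1n addrK big_mkord. Qed.

Definition power_sum_stirling n : {poly rat} :=
  \sum_(k < n.+1) ((stirling2 n k)%:R / k.+1%:R) *: falling _ k.+1.

Lemma power_sum_stirling_forward_diff n x :
  (power_sum_stirling n).[x + 1] - (power_sum_stirling n).[x] = x ^+ n.
Proof.
rewrite -[x ^+ n]hornerXn expX_stirling_comb /power_sum_stirling /stirling_comb.
rewrite !horner_sum -sumrB; apply: eq_bigr => k _.
by rewrite !hornerZ -mulrBr falling_forward_diff mulr1 mulrA divfK ?pnatr_eq0.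
Qed.

Lemma horner0_power_sum_stirling n : (power_sum_stirling n).[0] = 0.
Proof.
rewrite horner_sum big1 // => k _.
by rewrite hornerZ horner_falling big_ord_recl subrr mul0r mulr0.
Qed.

(* [(B_(n+1)(x) - B_(n+1)) / (n + 1)], which is [sum_(m < x) m ^ n] for [x] natural. *)
Definition faulhaber n : {poly rat} := \poly_(l < n.+2)
  (if l is l'.+1 then 'C(n.+1, l)%:R * bernoulli (n - l') / n.+1%:R else 0).

Lemma horner_faulhaber n x : (faulhaber n).[x] =
  \sum_(0 <= i < n.+1) 'C(n.+1, i)%:R * bernoulli i / n.+1%:R * x ^+ (n.+1 - i).
Proof.
rewrite horner_poly big_ord_recl mul0r add0r big_mkord.
rewrite (reindex_inj rev_ord_inj); apply: eq_bigr => -[i lti] _ /=.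
have -> : (bump 0 (n.+1 - i.+1) = n.+1 - i)%N by rewrite /bump; lia.
have -> : (n - (0 + (n.+1 - i.+1)) = i)%N by lia.
by rewrite bin_sub // ltnW.
Qed.

Lemma faulhaber_forward_diff n x :
  (faulhaber n).[x + 1] - (faulhaber n).[x] = x ^+ n.
Proof.
pose c i := 'C(n.+1, i)%:R * bernoulli i / n.+1%:R.
rewrite !horner_faulhaber -sumrB.
transitivity (\sum_(0 <= i < n.+1) \sum_(0 <= a < n.+1 - i) c i * (x ^+ a *+ 'C(n.+1 - i, a))).
  by apply: eq_bigr => i _; rewrite -mulrBr forward_diff_expr mulr_sumr.
rewrite sum_triangle.
transitivity (\sum_(0 <= a < n.+1) 'C(n.+1, a)%:R / n.+1%:R * x ^+ a * ((n - a)%N == 0%N)%:R).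
  apply: eq_big_nat => a /andP [_ ltan].
  have -> : (n.+1 - a = (n - a).+1)%N by lia.
  rewrite -sum_bin_bernoulli mulr_sumr; apply: eq_big_nat => i /andP [_ ltin].
  have swap := @bin_mul_bin_sub n.+1 i a ltac:(lia).
  have -> : ((n - a).+1 = n.+1 - a)%N by lia.
  rewrite -mulr_natr /c.
  transitivity (('C(n.+1, i) * 'C(n.+1 - i, a))%:R * bernoulli i / n.+1%:R * x ^+ a).
    by rewrite natrM; ring.
  by rewrite swap natrM; ring.
rewrite big_nat_recr //= subnn eqxx mulr1 big1_seq ?add0r => [|a] /=.
  by rewrite binSn mulfV ?mul1r ?pnatr_eq0.
rewrite mem_index_iota => /andP [_ ltan].
have /negPf -> : (n - a != 0)%N by lia.
by rewrite mulr0.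
Qed.

Lemma power_sum_stirling_faulhaber n : power_sum_stirling n = faulhaber n.
Proof.
apply: poly_eq_forward_diff => [|x].
  by rewrite horner0_power_sum_stirling horner_coef0 coef_poly.
by rewrite power_sum_stirling_forward_diff faulhaber_forward_diff.
Qed.

Lemma harmonicS k : harmonic k.+1 = harmonic k + k.+1%:R^-1.
Proof. by rewrite /harmonic big_nat_recr. Qed.

Lemma stirling_comb_harmonicS n :
  stirling_comb harmonic n.+1 = 'X * stirling_comb harmonic n + faulhaber n.
Proof.
rewrite stirling_combS -power_sum_stirling_faulhaber; congr (_ + _).
by apply: eq_bigr => k _; rewrite harmonicS addrC addKr.
Qed.

Lemma bin_div_subn_add n j : (j < n)%N ->
  'C(n, j)%:R / (n - j)%:R + 'C(n.+1, j.+1)%:R / n.+1%:R =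
  'C(n.+1, j.+1)%:R / (n - j)%:R :> rat.
Proof.
move=> ltjn.
have nj_neq0 : (n - j)%:R != 0 :> rat by rewrite pnatr_eq0 subn_eq0 -ltnNge.
have -> : 'C(n, j)%:R = j.+1%:R * 'C(n.+1, j.+1)%:R / n.+1%:R :> rat.
  by rewrite -natrM -(mul_bin_diag n.+1) natrM mulrC mulKf ?pnatr_eq0.
have n1E : n.+1%:R = (n - j)%:R + j.+1%:R :> rat by rewrite -natrD; congr _%:R; lia.
by rewrite n1E; field; rewrite nj_neq0 nat1r -n1E pnatr_eq0.
Qed.

Lemma coef_stirling_comb_harmonic n j : (stirling_comb harmonic n)`_j =
  if (j < n)%N then ('C(n, j)%:R - 1) * bernoulli (n - j) / (n - j)%:R
  else if j == n then harmonic n else 0.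
Proof.
elim: n j => [|n IH] j.
  rewrite /stirling_comb big_ord1 /harmonic big_geq // mulr0 scale0r coef0.
  by case: j.
rewrite stirling_comb_harmonicS coefD coefXM /faulhaber coef_poly.
case: j => [|j] /=; first by rewrite add0r bin0 subrr !mul0r.
rewrite IH !ltnS; have [ltjn|lenj] := ltnP j n.
  rewrite (ltnW ltjn) subSS.
  transitivity (('C(n, j)%:R / (n - j)%:R + 'C(n.+1, j.+1)%:R / n.+1%:R) *
    bernoulli (n - j) - bernoulli (n - j) / (n - j)%:R); first ring.
  by rewrite bin_div_subn_add //; ring.
rewrite eqSS; case: eqP => [->|/eqP neq_jn].
  by rewrite leqnn subnn binn /bernoulli /= mul1r harmonicS.
by rewrite leqNgt ltn_neqAle eq_sym neq_jn lenj addr0.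
Qed.

Theorem mainTheorem1 (n j : nat) (hn : (1 <= n)%N) (hj : (j <= n - 1)%N) :
  \sum_(j <= k < n.+1)
     (-1) ^+ (k - j) * (stirling2 n k)%:R * (stirling1 k j)%:R * harmonic k
  = (('C(n, j))%:R - 1) * bernoulli (n - j) / (n - j)%:R :> rat.
Proof.
have ltjn : (j < n)%N by lia.
by rewrite -coef_stirling_comb ?coef_stirling_comb_harmonic ?ltjn // ltnW.
Qed.
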